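(* Let $n,r\ge1$, let $M\in\mathbb{F}[x]^{r\times r}$ and $N\in\mathbb{F}[y]^{r\times r}$ have all entries of degree $<n$, and let $\omega\in\mathbb{F}$ have multiplicative order $\ge n^2$. Then for every $\alpha\in\mathbb{F}$, $$\mathrm{span}\{\mathrm{coeff}_{x^iy^j}(M(x)N(y))\}_{0\le i,j<n}\supseteq\mathrm{span}\{M(\omega^\ell\alpha)N((\omega^\ell\alpha)^n)\}_{0\le\ell<r^2},$$ and for all but fewer than $n^2r^2$ values of $\alpha\in\mathbb{F}$ these two spans are equal.
   Context: For a matrix $P$ with polynomial entries, $\mathrm{coeff}_{x^iy^j}(P)$ is the scalar matrix obtained by taking the coefficient of the monomial $x^iy^j$ in each entry. Spans are $\mathbb{F}$-linear spans in $\mathbb{F}^{r\times r}$. *)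

From HB Require Import structures.
From mathcomp Require Import all_boot all_order all_algebra.
Set Implicit Arguments. Unset Strict Implicit. Unset Printing Implicit Defensive.
Import GRing.Theory.
Local Open Scope ring_scope.

(* Bivariate polynomials in x (inner variable) and y (outer variable):
   an element P : {poly {poly F}} has coefficient of x^i y^j equal to (P`_j)`_i. *)

Definition liftX (F : fieldType) (r : nat) (M : 'M[{poly F}]_r) : 'M[{poly {poly F}}]_r :=
  map_mx (fun p : {poly F} => p%:P) M.

Definition liftY (F : fieldType) (r : nat) (N : 'M[{poly F}]_r) : 'M[{poly {poly F}}]_r :=
  map_mx (fun q : {poly F} => map_poly polyC q) N.

Definition coeffXY (F : fieldType) (r : nat) (P : 'M[{poly {poly F}}]_r) (i j : nat)
  : 'M[F]_r :=
  \matrix_(a, b) ((P a b)`_j)`_i.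

Definition evalmx (F : fieldType) (r : nat) (M : 'M[{poly F}]_r) (a : F) : 'M[F]_r :=
  map_mx (fun p => p.[a]) M.

Definition coeff_family (F : fieldType) (r n : nat) (M N : 'M[{poly F}]_r) : seq 'M[F]_r :=
  [seq coeffXY (liftX M *m liftY N) i j | i <- iota 0 n, j <- iota 0 n].

Definition eval_family (F : fieldType) (r n : nat) (M N : 'M[{poly F}]_r) (w a : F)
  : seq 'M[F]_r :=
  [seq evalmx M (w ^+ l * a) *m evalmx N ((w ^+ l * a) ^+ n) | l <- iota 0 (r ^ 2)].

Definition order_ge (F : fieldType) (w : F) (k : nat) : Prop :=
  w != 0 /\ forall m : nat, (0 < m)%N -> (m < k)%N -> w ^+ m != 1.

(* Writing C k for the coefficient of x^i y^j with k = i + n j, one has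
   M(b) N(b^n) = \sum_(k < n^2) b^k C k, so the statement is an instance of a
   general fact about a sequence C 0, ..., C (N - 1) in a space of dimension
   <= R (theorem evaluations_span).  Its proof selects the pivots k_0 < ... <
   k_(d-1) of C (the indices where C k leaves the span of the earlier ones);
   they give a basis in which C j only involves pivots k_t <= j, with
   coefficient 1 when j = k_t.  The coordinates of \sum_k (w^l a)^k C k in this
   basis form a d x d matrix G(a) of polynomials in a; G factors as a matrix
   Q times diag(a^k_t), and Q(0) is the Vandermonde matrix of the distinct
   powers w^k_t, so det G is a nonzero polynomial of degree < N R.  Away from
   its roots G(a) is invertible and the pivot basis is recovered from the
   evaluations. *)

From HB Require Import structures.
From mathcomp Require Import all_boot all_order all_algebra.
From mathcomp Require Import perm zify ring.
From Stdlib Require Import Classical.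
Import GRing.Theory.
Local Open Scope ring_scope.

Set Implicit Arguments. Unset Strict Implicit. Unset Printing Implicit Defensive.

Section PolynomialBounds.
Variable F : fieldType.

Lemma size_det_le d (A : 'M[{poly F}]_d) N :
  (forall i j, (size (A i j) <= N)%N) -> (size (\det A) <= d * (N - 1) + 1)%N.
Proof.
move=> hA; apply: leq_trans (size_sum _ _ _) _.
apply/bigmax_leqP => s _; rewrite size_Msign.
apply: leq_trans (size_poly_prod_leq _ _) _; rewrite cardT size_enum_ord.
have sum_le : (\sum_(i < d) size (A i (s i)) <= \sum_(i < d) N)%N by apply: leq_sum.
rewrite sum_nat_const card_ord in sum_le; move: (\sum_(i < d) _)%N sum_le => S.
by case: N {hA} => [|N]; rewrite ?muln0 ?subn1 ?mulnS /=; lia.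
Qed.

Lemma root_cover (p : {poly F}) : p != 0 ->
  exists s : seq F, (size s < size p)%N /\ forall a, root p a -> a \in s.
Proof.
move: {2}(size p) (leqnn (size p)) => m; elim: m p => [|m IH] p sp p0.
  by move: p0; rewrite -size_poly_eq0; move: sp; rewrite leqn0 => ->.
have [[a /factor_theorem [q pq]]|no_root] := classic (exists a, root p a); last first.
  exists [::]; split=> [|a ra]; first by rewrite lt0n size_poly_eq0.
  by case: no_root; exists a.
have q0 : q != 0 by apply: contraNneq p0; rewrite pq => ->; rewrite mul0r.
have sq : size p = (size q).+1.
  by rewrite pq size_mul ?polyXsubC_eq0 // size_XsubC addn2.
have [s [ss hs]] := IH q ltac:(by rewrite -ltnS -sq) q0.
exists (a :: s); split=> [|b]; first by rewrite /= sq.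
by rewrite pq rootM root_XsubC inE => /orP [/hs ->|->]; rewrite ?orbT ?eqxx.
Qed.

End PolynomialBounds.

Lemma expr_neq_lt_order (F : fieldType) (w : F) N i j :
  w != 0 -> (forall m, (0 < m)%N -> (m < N)%N -> w ^+ m != 1) ->
  (i < j)%N -> (j < N)%N -> w ^+ i != w ^+ j.
Proof.
move=> w0 hw ij jN.
have /negP w_ji : w ^+ (j - i) != 1.
  by apply: hw; [rewrite subn_gt0 | exact: leq_ltn_trans (leq_subr _ _) jN].
apply/eqP => wij; apply: w_ji; apply/eqP/(mulfI (expf_neq0 i w0)).
by rewrite -exprD subnKC ?mulr1 ?wij // ltnW.
Qed.

Section CoordinatesOfPrefix.
Variables (F : fieldType) (vT : vectType F).

Lemma coord_span_take n (X : n.-tuple vT) m v (t : 'I_n) :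
  free X -> v \in <<take m X>>%VS -> (m <= t)%N -> coord X t v = 0.
Proof.
move=> freeX; rewrite -[take m X]/(val (in_tuple (take m X))).
move=> /coord_span -> mt; rewrite linear_sum big1 // => s _.
have := leq_trans (ltn_ord s) (eq_leq (size_take_min m X)).
rewrite size_tuple leq_min => /andP [s_lt_m s_lt_n].
rewrite linearZ /= nth_take // -[s : nat]/(nat_of_ord (Ordinal s_lt_n)).
rewrite coord_free // mulr_natr; case: eqP => [st|_]; last by rewrite mulr0n.
by move: mt; rewrite -st /= leqNgt s_lt_m.
Qed.

End CoordinatesOfPrefix.

Section Pivots.
Variables (F : fieldType) (vT : vectType F) (C : nat -> vT).

Definition pivot k : bool := C k \notin <<map C (iota 0 k)>>%VS.

Definition pivots m : seq nat := [seq k <- iota 0 m | pivot k].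

Lemma pivots_cat j m :
  (j <= m)%N -> pivots m = pivots j ++ [seq k <- iota j (m - j) | pivot k].
Proof. by move=> jm; rewrite /pivots -{1}(subnKC jm) iotaD filter_cat. Qed.

Lemma pivotsS m : pivots m.+1 = pivots m ++ (if pivot m then [:: m] else [::]).
Proof. by rewrite (pivots_cat (leqnSn m)) subSnn /=; case: (pivot m). Qed.

Lemma mem_pivots m k : (k \in pivots m) = (k < m)%N && pivot k.
Proof. by rewrite mem_filter mem_iota add0n andbC. Qed.

Lemma sorted_pivots m : sorted ltn (pivots m).
Proof. exact/sorted_filter/iota_ltn_sorted/ltn_trans. Qed.

Lemma span_pivots m : <<map C (iota 0 m)>>%VS = <<map C (pivots m)>>%VS.
Proof.
elim: m => [|m IH] //; rewrite pivotsS -addn1 iotaD !map_cat !span_cat -IH /=.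
case: ifP => [_ //|/negbFE Cm_old]; rewrite span_nil addv0; apply/addv_idPl.
by rewrite span_seq1 -memvE.
Qed.

Lemma free_pivots m : free (map C (pivots m)).
Proof.
elim: m => [|m IH]; first exact: nil_free.
rewrite pivotsS map_cat; case: ifP => [new|_]; last by rewrite cats0.
rewrite (perm_free (Y := C m :: map C (pivots m))); last by rewrite /= cats1 perm_rcons.
by rewrite free_cons IH -span_pivots andbT; exact: new.
Qed.

End Pivots.

Section PivotCoordinates.
Variables (F : fieldType) (vT : vectType F) (C : nat -> vT) (N : nat).

Local Notation K := (pivots C N).

Definition pivot_index (t : 'I_(size K)) : nat := nth 0%N K t.
Definition pivot_basis : (size K).-tuple vT := [tuple C (pivot_index t) | t < size K].

Definition pivot_coord j (t : 'I_(size K)) : F := coord pivot_basis t (C j).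

Lemma pivot_basisE : val pivot_basis = map C K.
Proof.
apply: (@eq_from_nth _ 0) => [|i]; rewrite size_tuple ?size_map // => iK.
by rewrite (nth_map 0%N) // -[i]/(nat_of_ord (Ordinal iK)) -tnth_nth tnth_mktuple.
Qed.

Lemma pivot_basis_nth (t : 'I_(size K)) : pivot_basis`_t = C (pivot_index t).
Proof. by rewrite -tnth_nth tnth_mktuple. Qed.

Lemma free_pivot_basis : free pivot_basis.
Proof. by rewrite pivot_basisE free_pivots. Qed.

Lemma pivot_index_lt t : (pivot_index t < N)%N.
Proof. by have := mem_nth 0%N (ltn_ord t); rewrite mem_pivots => /andP []. Qed.

Lemma pivot_index_increasing (t s : 'I_(size K)) :
  (t < s)%N -> (pivot_index t < pivot_index s)%N.
Proof. by apply: (sorted_ltn_nth ltn_trans 0%N (sorted_pivots C N)); rewrite inE. Qed.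

Lemma size_pivots_le_dim : (size K <= \dim (fullv : {vspace vT}))%N.
Proof.
have /eqP := free_pivots C N; rewrite size_map => <-.
exact/dimvS/subvf.
Qed.

Lemma pivot_expand j : (j < N)%N ->
  C j = \sum_t pivot_coord j t *: C (pivot_index t).
Proof.
move=> jN; rewrite {1}(coord_span (X := pivot_basis) (v := C j)).
  by apply: eq_bigr => t _; rewrite pivot_basis_nth.
by rewrite pivot_basisE -span_pivots memv_span // map_f // mem_iota.
Qed.

Lemma pivot_coord_upper j t : (j < pivot_index t)%N -> pivot_coord j t = 0.
Proof.
move=> jt; have jN : (j.+1 <= N)%N := leq_trans jt (ltnW (pivot_index_lt t)).
apply: (coord_span_take (m := size (pivots C j.+1))) free_pivot_basis _ _.
  rewrite pivot_basisE (pivots_cat C jN) map_cat take_size_cat ?size_map //.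
  by rewrite -span_pivots memv_span // map_f // mem_iota add0n ltnSn.
rewrite leqNgt; apply/negP; move: jt; rewrite /pivot_index; move: (nat_of_ord t) => i.
rewrite (pivots_cat C jN) nth_cat => + i_small; rewrite i_small.
have := mem_nth 0%N i_small; rewrite mem_pivots => /andP [+ _].
by rewrite ltnS leqNgt => /negbTE ->.
Qed.

Lemma pivot_coord_diag t : pivot_coord (pivot_index t) t = 1.
Proof. by rewrite /pivot_coord -pivot_basis_nth coord_free ?free_pivot_basis ?eqxx. Qed.

End PivotCoordinates.

Lemma combination_invmx (R : comUnitRingType) (V : lmodType R) d (A : 'M[R]_d)
    (B E : 'I_d -> V) :
  A \in unitmx -> (forall l, E l = \sum_t A l t *: B t) ->
  forall s, B s = \sum_l invmx A s l *: E l.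
Proof.
move=> Aunit defE s; under eq_bigr do rewrite defE scaler_sumr.
rewrite exchange_big /=.
under eq_bigr do (under eq_bigr do rewrite scalerA; rewrite -scaler_suml).
have invA_A t : \sum_l invmx A s l * A l t = (s == t)%:R.
  by have /matrixP /(_ s t) := mulVmx Aunit; rewrite !mxE.
under eq_bigr do rewrite invA_A.
rewrite (bigD1 s) //= eqxx scale1r big1 ?addr0 // => t ts.
by rewrite eq_sym (negbTE ts) scale0r.
Qed.

Section GenericEvaluations.
Variables (F : fieldType) (vT : vectType F) (C : nat -> vT) (N : nat) (w : F).
Hypothesis w_neq0 : w != 0.
Hypothesis w_order : forall m, (0 < m)%N -> (m < N)%N -> w ^+ m != 1.

Definition power_eval (b : F) : vT := \sum_(j < N) b ^+ j *: C j.

Local Notation d := (size (pivots C N)).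
Local Notation k := (@pivot_index _ _ C N).
Local Notation c := (@pivot_coord _ _ C N).

Lemma power_eval_in_span b : power_eval b \in <<map C (iota 0 N)>>%VS.
Proof.
apply: memv_suml => j _; apply/memvZ/memv_span/map_f.
by rewrite mem_iota add0n ltn_ord.
Qed.

Definition eval_matrix : 'M[{poly F}]_d :=
  \matrix_(l, t) \poly_(j < N) (c j t * w ^+ (l * j)).

Lemma power_eval_pivot_basis a (l : 'I_d) :
  power_eval (w ^+ l * a) = \sum_t (eval_matrix l t).[a] *: C (k t).
Proof.
rewrite /power_eval.
under eq_bigr => j _ do rewrite {1}(pivot_expand C (ltn_ord j)) scaler_sumr.
rewrite exchange_big /=; apply: eq_bigr => t _.
under eq_bigr do rewrite scalerA; rewrite -scaler_suml mxE horner_poly.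
congr (_ *: _); apply: eq_bigr => j _.
by rewrite exprMn -exprM mulrC mulrA.
Qed.

(* By triangularity, column t of eval_matrix is divisible by 'X^(k t) ... *)
Definition eval_matrix_shifted : 'M[{poly F}]_d :=
  \matrix_(l, t) \poly_(i < N - k t) (c (k t + i) t * w ^+ (l * (k t + i))).

Lemma eval_matrix_factor :
  eval_matrix = eval_matrix_shifted *m diag_mx (\row_t 'X^(k t)).
Proof.
apply/matrixP => l t; rewrite mul_mx_diag !mxE; apply/polyP => i.
rewrite coefMXn !coef_poly; have kN := pivot_index_lt t.
case: (ltnP i (k t)) => [ik|ki]; first by rewrite pivot_coord_upper ?mul0r ?if_same.
by rewrite subnKC // ltn_sub2rE.
Qed.

Lemma eval_matrix_shifted_at0 :
  map_mx (horner_eval 0) eval_matrix_shifted = Vandermonde d (\row_t w ^+ k t).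
Proof.
apply/matrixP => l t; rewrite !mxE /horner_eval horner_coef0 coef_poly.
by rewrite subn_gt0 pivot_index_lt addn0 pivot_coord_diag mul1r mulnC exprM.
Qed.

Lemma det_eval_matrix_neq0 : \det eval_matrix != 0.
Proof.
rewrite eval_matrix_factor det_mulmx det_diag mulf_neq0 //; last first.
  by apply/prodf_neq0 => t _; rewrite mxE monic_neq0 ?monicXn.
have : \det (map_mx (horner_eval 0) eval_matrix_shifted) != 0.
  rewrite eval_matrix_shifted_at0 det_Vandermonde.
  apply/prodf_neq0 => s _; apply/prodf_neq0 => t st; rewrite !mxE subr_eq0 eq_sym.
  exact: expr_neq_lt_order w_neq0 w_order (pivot_index_increasing st) (pivot_index_lt t).
by rewrite det_map_mx; apply: contraNneq => ->; rewrite rmorph0.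
Qed.

(* Outside the roots of det eval_matrix, the first d of them are
   related to the pivot basis by an invertible matrix. *)
Theorem evaluations_span R :
  (0 < N)%N -> (0 < R)%N -> (\dim (fullv : {vspace vT}) <= R)%N ->
  exists bad : seq F, (size bad < N * R)%N /\ forall a, a \notin bad ->
    (<<map C (iota 0 N)>> <= <<[seq power_eval (w ^+ l * a) | l <- iota 0 R]>>)%VS.
Proof.
move=> N_gt0 R_gt0 dimR; have dR : (d <= R)%N := leq_trans (size_pivots_le_dim C N) dimR.
have [bad [size_bad bad_roots]] := root_cover det_eval_matrix_neq0.
exists bad; split.
  have entries_small l t : (size (eval_matrix l t) <= N)%N by rewrite mxE size_poly.
  apply: leq_trans size_bad (leq_trans (size_det_le entries_small) _).
  rewrite -[(N * R)%N](_ : R * (N - 1) + R = _)%N; last first.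
    by rewrite -mulnSr subn1 prednK // mulnC.
  by rewrite leq_add // leq_mul2r dR orbT.
move=> a a_good; pose Ea := map_mx (horner_eval a) eval_matrix.
have Ea_unit : Ea \in unitmx.
  by rewrite unitmxE unitfE det_map_mx; apply: contra a_good; apply: bad_roots.
have pivot_combination t :
    C (k t) = \sum_(l < d) invmx Ea t l *: power_eval (w ^+ l * a).
  apply: (combination_invmx (B := fun t => C (k t))
            (E := fun l : 'I_d => power_eval (w ^+ l * a)) Ea_unit) => l.
  by rewrite power_eval_pivot_basis; apply: eq_bigr => s _; rewrite [in RHS]mxE.
have pivot_in_span t : C (k t) \in <<[seq power_eval (w ^+ l * a) | l <- iota 0 R]>>%VS.
  rewrite pivot_combination; apply: memv_suml => l _; apply/memvZ/memv_span/map_f.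
  by rewrite mem_iota add0n (leq_trans (ltn_ord l) dR).
apply/span_subvP => x /mapP [j]; rewrite mem_iota add0n => /andP [_ jN] ->.
by rewrite (pivot_expand C jN); apply: memv_suml => t _; apply/memvZ/pivot_in_span.
Qed.

End GenericEvaluations.

Lemma sum_ord_mul (V : nmodType) n m (f : nat -> V) :
  \sum_(j < n * m) f j = \sum_(k < m) \sum_(i < n) f (i + n * k)%N.
Proof.
elim: m => [|m IH]; first by rewrite muln0 !big_ord0.
rewrite big_ord_recr /= -IH -!(big_mkord xpredT) mulnS addnC.
rewrite (big_cat_nat (n := n * m)) ?leq_addr //=; congr (_ + _).
rewrite -{1}[(n * m)%N]add0n big_addn addKn big_mkord.
by apply: eq_bigr => i _; rewrite addnC.
Qed.

Lemma horner_mul_horner_pow (R : comNzRingType) n (p q : {poly R}) (b : R) :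
  (0 < n)%N -> (size p <= n)%N -> (size q <= n)%N ->
  p.[b] * q.[b ^+ n] = \sum_(j < n * n) b ^+ j * (p`_(j %% n) * q`_(j %/ n)).
Proof.
move=> n_gt0 sp sq; rewrite (horner_coef_wide b sp) (horner_coef_wide _ sq).
rewrite (sum_ord_mul n n (fun j => b ^+ j * (p`_(j %% n) * q`_(j %/ n)))) /=.
rewrite mulr_suml exchange_big /=; apply: eq_bigr => i _.
rewrite mulr_sumr; apply: eq_bigr => j _.
have -> : ((i + n * j) %% n = i)%N by rewrite mulnC addnC modnMDl modn_small.
have -> : ((i + n * j) %/ n = j)%N by rewrite mulnC addnC divnMDl // divn_small ?addn0.
by rewrite exprD exprM; ring.
Qed.

Section CoefficientFamily.
Variables (F : fieldType) (n r : nat) (M N : 'M[{poly F}]_r).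
Hypothesis n_gt0 : (0 < n)%N.

Definition coeff_seq (k : nat) : 'M[F]_r :=
  coeffXY (liftX M *m liftY N) (k %% n) (k %/ n).

Lemma coeffXY_mul i j a b :
  coeffXY (liftX M *m liftY N) i j a b = \sum_c (M a c)`_i * (N c b)`_j.
Proof.
rewrite !mxE !coef_sum; apply: eq_bigr => c _.
by rewrite !mxE coefCM coef_map /= coefMC.
Qed.

Lemma coeff_seq_index i j :
  (i < n)%N -> coeff_seq (i + n * j) = coeffXY (liftX M *m liftY N) i j.
Proof.
move=> i_lt_n; rewrite /coeff_seq mulnC addnC modnMDl modn_small //.
by rewrite divnMDl // divn_small ?addn0.
Qed.

Lemma span_coeff_family :
  <<coeff_family n M N>>%VS = <<map coeff_seq (iota 0 (n * n))>>%VS.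
Proof.
apply: eq_span => x; apply/allpairsP/mapP => [[[i j] [/= + + ->]]|[k + ->]].
  rewrite !mem_iota !add0n => /andP [_ i_lt_n] /andP [_ j_lt_n].
  exists (i + n * j)%N.
    have : (n * j + n <= n * n)%N by rewrite -mulnSr leq_mul2l j_lt_n orbT.
    by rewrite mem_iota add0n; lia.
  by rewrite coeff_seq_index.
rewrite mem_iota add0n => k_lt; exists (k %% n, k %/ n)%N.
by rewrite !mem_iota !add0n ltn_pmod // ltn_divLR.
Qed.

Lemma evalmx_mul_power_eval b :
  (forall i j, (size (M i j) <= n)%N) -> (forall i j, (size (N i j) <= n)%N) ->
  evalmx M b *m evalmx N (b ^+ n) = power_eval coeff_seq (n * n) b.
Proof.
move=> hM hN; apply/matrixP => a a'; rewrite /power_eval summxE !mxE.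
under [RHS]eq_bigr do rewrite mxE coeffXY_mul mulr_sumr.
rewrite exchange_big /=; apply: eq_bigr => c _.
by rewrite !mxE horner_mul_horner_pow.
Qed.

End CoefficientFamily.

Theorem lemma3p5 (F : fieldType) (n r : nat) (hn : (1 <= n)%N) (hr : (1 <= r)%N)
  (M N : 'M[{poly F}]_r)
  (hM : forall i j, (size (M i j) <= n)%N)
  (hN : forall i j, (size (N i j) <= n)%N)
  (w : F) (hw : order_ge w (n ^ 2)) :
  (forall a : F,
     (<<eval_family n M N w a>> <= <<coeff_family n M N>>)%VS) /\
  (exists bad : seq F, (size bad < n ^ 2 * r ^ 2)%N /\
     forall a : F, a \notin bad ->
       <<coeff_family n M N>>%VS = <<eval_family n M N w a>>%VS).
Proof.
case: hw => w_neq0; rewrite -mulnn => w_order.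
have eval_familyE a : eval_family n M N w a =
    [seq power_eval (coeff_seq n M N) (n * n) (w ^+ l * a) | l <- iota 0 (r ^ 2)].
  by apply: eq_map => l; rewrite evalmx_mul_power_eval.
have eval_in_coeff a : (<<eval_family n M N w a>> <= <<coeff_family n M N>>)%VS.
  rewrite span_coeff_family // eval_familyE.
  by apply/span_subvP => _ /mapP [l _ ->]; apply: power_eval_in_span.
split=> //.
have dim_matrices : (\dim (fullv : {vspace 'M[F]_r}) <= r ^ 2)%N.
  by rewrite dimvf dim_matrix -mulnn.
have nn_gt0 : (0 < n * n)%N by rewrite muln_gt0 hn.
have r2_gt0 : (0 < r ^ 2)%N by rewrite expn_gt0 hr.
have [bad [size_bad coeff_in_eval]] :=
  evaluations_span (coeff_seq n M N) w_neq0 w_order nn_gt0 r2_gt0 dim_matrices.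
exists bad; rewrite -mulnn; split=> // a a_good.
apply/eqP; rewrite eqEsubv eval_in_coeff andbT span_coeff_family // eval_familyE.
exact: coeff_in_eval.
Qed.
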